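(* Let $Y_1=1$ and, for $n\ge2$, $Y_n=\lfloor (n+I)/2\rfloor$ with $I\sim$ Bernoulli$(1/2)$. Consider the leader election process started with $n$ players and stopped as soon as at most $3$ players remain, and let $\pi_i(n)$ be the probability that it ends with exactly $i$ players. Then for every $n\ge2$, $\pi_2(n)=\psi_2(n)$ where $\psi_2(2^x)=|2^{1+x-\lfloor x\rfloor}-3|$ for real $x\ge1$; moreover $\pi_3(n)=1-\pi_2(n)$ and $\pi_1(n)=0$ for $n\ge2$.
   Context: The process: $N_0=n$ and $N_{k+1}$ has the law of $Y_{N_k}$ given the past; it stops at the first $k$ with $N_k\le 3$, ending with $N_k$ players. *)

From Stdlib Require Import Reals Arith.
Open Scope R_scope.

(* Law of Y_j : Y_1 = 1, and for j >= 2, Y_j = floor((j+I)/2), I ~ Bernoulli(1/2). 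
   lawY j m = P(Y_j = m). *)
Definition lawY (j m : nat) : R :=
  if (j <=? 1)%nat then (if Nat.eqb m 1 then 1 else 0)
  else (if Nat.eqb m (j / 2)%nat then / 2 else 0)
     + (if Nat.eqb m ((j + 1) / 2)%nat then / 2 else 0).

Definition stopK (j m : nat) : R :=
  if (j <=? 3)%nat then (if Nat.eqb j m then 1 else 0) else lawY j m.

(* dist k n m = P(N_{min(k,T)} = m) for the process started at N_0 = n,
   T = first time with N_T <= 3.  States never exceed n, so summing over
   j in {0..n} covers the whole support. *)
Fixpoint dist (k n m : nat) : R :=
  match k with
  | O => if Nat.eqb n m then 1 else 0
  | S k' => sum_f_R0 (fun j => dist k' n j * stopK j m) n
  end.

(* pi_i(n) = P(process ends with exactly i players) = lim_k P(N_{min(k,T)} = i)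
   (for i <= 3).  is_pi i n p  means  pi_i(n) = p. *)
Definition is_pi (i n : nat) (p : R) : Prop :=
  Un_cv (fun k => dist k n i) p.

(* psi_2(2^x) = | 2^(1 + x - floor x) - 3 |, i.e. psi_2(y) with x = log_2 y. *)
Definition psi2 (y : R) : R :=
  let x := ln y / ln 2 in
  Rabs (Rpower 2 (1 + x - IZR (Int_part x)) - 3).

(* Idea (optional stopping for a martingale).  Call h : nat -> R harmonic when
   h i = (h (i/2) + h ((i+1)/2)) / 2 for every i >= 4, i.e. h is preserved by one
   step of the stopped chain (states <= 3 are absorbing).  Then the mean of
   h (N_k) does not depend on k.  A state j >= 4 is left after one step and the
   chain strictly decreases until it is absorbed, so after k >= n steps the
   distribution is carried by {0, 1, 2, 3}; hence for k >= n
        sum_{j <= 3} P(N_k = j) h j = h n.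
   Applying this to three functions that are constant on {2, 3, ...} gives
   P(N_k = 0) = P(N_k = 1) = 0 and P(N_k = 2) + P(N_k = 3) = 1, and applying it
   to j |-> psi2 j (which equals 1 at 2 and 0 at 3) gives P(N_k = 2) = psi2 n.
   The key computation is that psi2 is harmonic: on each dyadic block
   [2^(k+1), 2^(k+2)] it is the tent function |j - 3 2^k| / 2^k, and averaging
   a tent over the two consecutive integers i/2, (i+1)/2 is exact. *)

From Pilot Require Import Defs.
From Stdlib Require Import Reals Lra Lia.
Open Scope R_scope.

(* The law of the stopped chain is written Defs.dist: Reals also exports a
   (metric-space) dist. *)

Lemma Int_part_nat_plus_frac (k : nat) (t : R) :
  0 <= t < 1 -> IZR (Int_part (INR k + t)) = INR k.
Proof.
  intros Ht. unfold Int_part.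
  rewrite <- (tech_up (INR k + t) (Z.of_nat k + 1)).
  - rewrite minus_IZR, plus_IZR, <- INR_IZR_INZ. lra.
  - rewrite plus_IZR, <- INR_IZR_INZ. lra.
  - rewrite plus_IZR, <- INR_IZR_INZ. lra.
Qed.

Lemma log2_mantissa (r : R) : 1 <= r < 2 -> 0 <= ln r / ln 2 < 1.
Proof.
  intros Hr.
  assert (Hl2 : 0 < ln 2) by (pose proof ln_lt_2; lra).
  assert (Hlow : 0 <= ln r).
  { destruct (Req_dec r 1) as [-> | Hne]; [rewrite ln_1; lra |].
    rewrite <- ln_1. left. apply ln_increasing; lra. }
  assert (Hup : ln r < ln 2) by (apply ln_increasing; lra).
  split.
  - apply Rmult_le_pos; [lra | left; apply Rinv_0_lt_compat; lra].
  - apply Rmult_lt_reg_r with (ln 2); [lra |]. field_simplify; lra.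
Qed.

Lemma psi2_scaled (k : nat) (r : R) : 1 <= r < 2 -> psi2 (2 ^ k * r) = Rabs (2 * r - 3).
Proof.
  intros Hr.
  assert (Hl2 : 0 < ln 2) by (pose proof ln_lt_2; lra).
  assert (Hpow : 0 < 2 ^ k) by (apply pow_lt; lra).
  pose proof (log2_mantissa r Hr) as Ht.
  set (t := ln r / ln 2) in Ht.
  assert (Hx : ln (2 ^ k * r) / ln 2 = INR k + t).
  { rewrite ln_mult, ln_pow by lra. unfold t. field. lra. }
  unfold psi2. rewrite Hx, Int_part_nat_plus_frac by exact Ht.
  replace (1 + (INR k + t) - INR k) with (1 + t) by ring.
  replace (Rpower 2 (1 + t)) with (2 * r); [reflexivity |].
  unfold Rpower. replace ((1 + t) * ln 2) with (ln 2 + ln r) by (unfold t; field; lra).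
  rewrite exp_plus, !exp_ln; lra.
Qed.

Lemma psi2_dyadic (k j : nat) : (2 ^ S k <= j <= 2 ^ S (S k))%nat ->
  psi2 (INR j) = Rabs (INR j - INR (3 * 2 ^ k)) / INR (2 ^ k).
Proof.
  intros Hj.
  assert (HD : 0 < 2 ^ k) by (apply pow_lt; lra).
  assert (E3 : INR 3 = 3) by (simpl; ring).
  rewrite mult_INR, pow_INR, E3. change (INR 2) with 2.
  destruct (Nat.eq_dec j (2 ^ S (S k))) as [-> | Hne].
  - rewrite pow_INR. change (INR 2) with 2.
    rewrite <- (Rmult_1_r (2 ^ S (S k))), psi2_scaled by lra. simpl pow.
    replace (2 * (2 * 2 ^ k) * 1 - 3 * 2 ^ k) with (2 ^ k) by ring.
    rewrite (Rabs_right (2 ^ k)) by lra.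
    rewrite Rabs_left by lra. field. lra.
  - assert (Hlow : 2 * 2 ^ k <= INR j).
    { replace (2 * 2 ^ k) with (INR (2 ^ S k)) by (rewrite pow_INR; reflexivity).
      apply le_INR. lia. }
    assert (Hup : INR j < 2 * (2 * 2 ^ k)).
    { replace (2 * (2 * 2 ^ k)) with (INR (2 ^ S (S k))) by (rewrite pow_INR; reflexivity).
      apply lt_INR. lia. }
    replace (INR j) with (2 ^ S k * (INR j / 2 ^ S k)) at 1 by (simpl; field; lra).
    rewrite psi2_scaled; simpl pow.
    + replace (2 * (INR j / (2 * 2 ^ k)) - 3) with ((INR j - 3 * 2 ^ k) * / 2 ^ k)
        by (field; lra).
      rewrite Rabs_mult, Rabs_inv, (Rabs_right (2 ^ k)) by lra. reflexivity.
    + split; [apply Rmult_le_reg_r with (2 * 2 ^ k) | apply Rmult_lt_reg_r with (2 * 2 ^ k)];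
        try lra; field_simplify; lra.
Qed.

Lemma psi2_2 : psi2 (INR 2) = 1.
Proof.
  rewrite (psi2_dyadic 0 2) by (simpl; lia). simpl.
  rewrite Rabs_left by lra. field.
Qed.

Lemma psi2_3 : psi2 (INR 3) = 0.
Proof.
  rewrite (psi2_dyadic 0 3) by (simpl; lia). simpl.
  replace (1 + 1 + 1 - (1 + 1 + 1)) with 0 by ring. rewrite Rabs_R0. field.
Qed.

Lemma halves (i : nat) :
  (i / 2 + (i + 1) / 2 = i /\ ((i + 1) / 2 = i / 2 \/ (i + 1) / 2 = i / 2 + 1))%nat.
Proof.
  pose proof (Nat.div_mod_eq i 2). pose proof (Nat.mod_upper_bound i 2).
  pose proof (Nat.div_mod_eq (i + 1) 2). pose proof (Nat.mod_upper_bound (i + 1) 2).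
  lia.
Qed.

(* Two consecutive integers lie weakly on the same side of any integer c, so the
   tent function |x - c| is additive on them. *)
Lemma Rabs_add_consecutive (a b c : nat) : (b = a \/ b = a + 1)%nat ->
  Rabs (INR a - INR c) + Rabs (INR b - INR c) = Rabs (INR a + INR b - 2 * INR c).
Proof.
  intros Hb. destruct (Nat.lt_ge_cases a c) as [Hac | Hca].
  - assert (INR a <= INR c) by (apply le_INR; lia).
    assert (INR b <= INR c) by (apply le_INR; lia).
    rewrite !Rabs_left1 by lra. ring.
  - assert (INR c <= INR a) by (apply le_INR; lia).
    assert (INR c <= INR b) by (apply le_INR; lia).
    rewrite !Rabs_right by lra. ring.
Qed.

Lemma sum_delta (g : nat -> R) (a N : nat) :
  sum_f_R0 (fun j => if Nat.eqb j a then g j else 0) N = if (a <=? N)%nat then g a else 0.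
Proof.
  induction N as [| N IH].
  - simpl. destruct a; reflexivity.
  - rewrite tech5, IH. destruct (Nat.eqb_spec (S N) a) as [<- | Hne].
    + rewrite (proj2 (Nat.leb_nle (S N) N)) by lia. rewrite Nat.leb_refl. ring.
    + destruct (Nat.leb_spec a N); destruct (Nat.leb_spec a (S N)); try lia; ring.
Qed.

Lemma sum_swap (a : nat -> nat -> R) (n m : nat) :
  sum_f_R0 (fun j => sum_f_R0 (fun i => a i j) n) m
  = sum_f_R0 (fun i => sum_f_R0 (fun j => a i j) m) n.
Proof.
  induction m as [| m IH]; simpl; [reflexivity |].
  rewrite IH, <- sum_plus. reflexivity.
Qed.

Lemma sum_vanishing_tail (g : nat -> R) (N : nat) :
  (3 <= N)%nat -> (forall j, (4 <= j)%nat -> g j = 0) ->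
  sum_f_R0 g N = g 0%nat + g 1%nat + g 2%nat + g 3%nat.
Proof.
  intros HN Hg. induction N as [| N IH]; [lia |].
  destruct (Nat.eq_dec N 2) as [-> | Hne]; [simpl; ring |].
  simpl. rewrite IH, (Hg (S N)) by lia. ring.
Qed.

Definition harmonic (h : nat -> R) : Prop :=
  forall i, (4 <= i)%nat -> h i = (h (i / 2)%nat + h ((i + 1) / 2)%nat) / 2.

Lemma stopK_harmonic (h : nat -> R) (i N : nat) :
  harmonic h -> (i <= N)%nat -> sum_f_R0 (fun j => stopK i j * h j) N = h i.
Proof.
  intros Hh HiN. destruct (Nat.leb_spec i 3) as [Hi | Hi].
  - rewrite (sum_eq _ (fun j => if Nat.eqb j i then h j else 0)).
    + rewrite sum_delta, (proj2 (Nat.leb_le i N)) by lia. reflexivity.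
    + intros j _. unfold stopK. rewrite (proj2 (Nat.leb_le i 3)), Nat.eqb_sym by lia.
      destruct (Nat.eqb j i); ring.
  - rewrite (sum_eq _ (fun j => (if Nat.eqb j (i / 2) then h j / 2 else 0)
                               + (if Nat.eqb j ((i + 1) / 2) then h j / 2 else 0))).
    + pose proof (halves i).
      rewrite sum_plus, !sum_delta, !(proj2 (Nat.leb_le _ N)) by lia.
      rewrite (Hh i) by lia. field.
    + intros j _. unfold stopK, lawY.
      rewrite (proj2 (Nat.leb_nle i 3)), (proj2 (Nat.leb_nle i 1)) by lia.
      destruct (Nat.eqb j (i / 2)); destruct (Nat.eqb j ((i + 1) / 2)); field.
Qed.

Lemma harmonic_mean_invariant (h : nat -> R) (n k : nat) :
  harmonic h -> sum_f_R0 (fun j => Defs.dist k n j * h j) n = h n.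
Proof.
  intros Hh. induction k as [| k IH].
  - simpl. rewrite (sum_eq _ (fun j => if Nat.eqb j n then h j else 0)).
    + rewrite sum_delta, Nat.leb_refl. reflexivity.
    + intros j _. rewrite Nat.eqb_sym. destruct (Nat.eqb j n); ring.
  - simpl.
    rewrite (sum_eq _ (fun j => sum_f_R0 (fun i => Defs.dist k n i * stopK i j * h j) n)).
    2:{ intros j _. rewrite <- scal_sum. ring. }
    rewrite sum_swap, <- IH. apply sum_eq. intros i Hi.
    rewrite <- (stopK_harmonic h i n Hh Hi), scal_sum.
    apply sum_eq. intros j _. ring.
Qed.

(* Each step strictly decreases a non-absorbed state, so a state j >= 4 cannot be
   occupied after k steps when n < j + k. *)
Lemma dist_unabsorbed (n k j : nat) :
  (4 <= j)%nat -> (n < j + k)%nat -> Defs.dist k n j = 0.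
Proof.
  revert j. induction k as [| k IH]; intros j Hj Hjk.
  - simpl. destruct (Nat.eqb_spec n j); [lia | reflexivity].
  - simpl. apply sum_eq_R0. intros i Hi. unfold stopK.
    destruct (Nat.leb_spec i 3).
    { destruct (Nat.eqb_spec i j); [lia | ring]. }
    destruct (Nat.ltb_spec n (i + k)).
    { rewrite IH by lia. ring. }
    unfold lawY. rewrite (proj2 (Nat.leb_nle i 1)) by lia. pose proof (halves i).
    destruct (Nat.eqb_spec j (i / 2)), (Nat.eqb_spec j ((i + 1) / 2)); try lia; ring.
Qed.

Lemma dist_small (n k m : nat) :
  (n <= 3)%nat -> Defs.dist k n m = if Nat.eqb n m then 1 else 0.
Proof.
  intros Hn. revert m. induction k as [| k IH]; intros m; [reflexivity |].
  simpl. rewrite (sum_eq _ (fun j => if Nat.eqb j n then stopK j m else 0)).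
  - rewrite sum_delta, Nat.leb_refl. unfold stopK.
    rewrite (proj2 (Nat.leb_le n 3)) by lia. reflexivity.
  - intros j _. rewrite IH, Nat.eqb_sym. destruct (Nat.eqb j n); ring.
Qed.

(* Optional stopping: after k >= n steps the process is absorbed, so the mean of a
   harmonic h over the absorbing states {0, 1, 2, 3} equals h n. *)
Lemma absorbed_mean (h : nat -> R) (n k : nat) :
  harmonic h -> (4 <= n)%nat -> (n <= k)%nat ->
  Defs.dist k n 0 * h 0%nat + Defs.dist k n 1 * h 1%nat
  + Defs.dist k n 2 * h 2%nat + Defs.dist k n 3 * h 3%nat = h n.
Proof.
  intros Hh Hn Hk. rewrite <- (harmonic_mean_invariant h n k Hh).
  symmetry. apply (sum_vanishing_tail (fun j => Defs.dist k n j * h j)); [lia |].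
  intros j Hj. rewrite dist_unabsorbed by lia. ring.
Qed.

(* Any function constant on {2, 3, ...} is harmonic, since i >= 4 has both halves
   >= 2. *)
Lemma harmonic_constant_from_2 (g : nat -> R) (c : R) :
  harmonic (fun j => if (j <=? 1)%nat then g j else c).
Proof.
  intros i Hi. pose proof (halves i).
  rewrite !(proj2 (Nat.leb_nle _ 1)) by lia. field.
Qed.

(* psi2 restricted to the states of the chain (the states 0 and 1 are irrelevant). *)
Definition psi2_nat (j : nat) : R := if (j <=? 1)%nat then 0 else psi2 (INR j).

(* For 2^(k+2) <= i < 2^(k+3) both i
   and its halves lie in dyadic blocks where psi2 is a tent with apex 3 2^(k+1),
   resp. 3 2^k, and the tent is additive on the two consecutive halves. *)
Lemma psi2_nat_harmonic : harmonic psi2_nat.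
Proof.
  intros i Hi. unfold psi2_nat. destruct (halves i) as [Hsum Hcons].
  pose proof (Nat.log2_spec i ltac:(lia)) as Hlog.
  destruct (Nat.log2 i) as [| [| k]]; [simpl in Hlog; lia | simpl in Hlog; lia |].
  assert (HD : (2 ^ S k = 2 * 2 ^ k)%nat) by reflexivity.
  rewrite !(proj2 (Nat.leb_nle _ 1)) by (simpl in Hlog; lia).
  rewrite (psi2_dyadic (S k) i), (psi2_dyadic k (i / 2)), (psi2_dyadic k ((i + 1) / 2))
    by (simpl in *; lia).
  assert (HDpos : 0 < INR (2 ^ k)) by (apply lt_0_INR, Nat.neq_0_lt_0, Nat.pow_nonzero; lia).
  assert (Hi_sum : INR i = INR (i / 2) + INR ((i + 1) / 2)) by (rewrite <- plus_INR; f_equal; lia).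
  replace (INR (3 * 2 ^ S k)) with (2 * INR (3 * 2 ^ k))
    by (rewrite HD, !mult_INR; simpl; ring).
  rewrite Hi_sum, <- (Rabs_add_consecutive _ _ (3 * 2 ^ k)) by exact Hcons.
  rewrite HD, (mult_INR 2). simpl (INR 2). field. lra.
Qed.

Lemma dist_absorbed (n k : nat) : (2 <= n)%nat -> (n <= k)%nat ->
  Defs.dist k n 1 = 0 /\ Defs.dist k n 2 = psi2 (INR n) /\ Defs.dist k n 3 = 1 - psi2 (INR n).
Proof.
  intros Hn Hk. destruct (Nat.leb_spec n 3) as [Hsmall | Hlarge].
  - rewrite !dist_small by lia.
    assert (n = 2 \/ n = 3)%nat as [-> | ->] by lia; cbn [Nat.eqb];
      rewrite ?psi2_2, ?psi2_3; lra.
  - (* Test functions: the indicators of 0 and of 1, the constant 1 on {2, 3, ...},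
       and psi2 itself. *)
    assert (Hn1 : (n <=? 1)%nat = false) by (apply Nat.leb_gt; lia).
    pose proof (absorbed_mean _ n k
      (harmonic_constant_from_2 (fun j => if Nat.eqb j 0 then 1 else 0) 0) ltac:(lia) Hk) as H0.
    pose proof (absorbed_mean _ n k
      (harmonic_constant_from_2 (fun j => if Nat.eqb j 1 then 1 else 0) 0) ltac:(lia) Hk) as H1.
    pose proof (absorbed_mean _ n k
      (harmonic_constant_from_2 (fun _ => 0) 1) ltac:(lia) Hk) as Htot.
    pose proof (absorbed_mean _ n k psi2_nat_harmonic ltac:(lia) Hk) as H2.
    unfold psi2_nat in H2. cbn [Nat.leb Nat.eqb] in H0, H1, Htot, H2.
    rewrite Hn1, psi2_2, psi2_3 in *. lra.
Qed.

Lemma Un_cv_eventually_constant (u : nat -> R) (l : R) (N : nat) :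
  (forall k, (N <= k)%nat -> u k = l) -> Un_cv u l.
Proof.
  intros Hu eps Heps. exists N. intros k Hk.
  rewrite Hu by lia. rewrite R_dist_eq. lra.
Qed.

Theorem mainTheorem7 (n : nat) (hn : (2 <= n)%nat) :
  is_pi 2 n (psi2 (INR n)) /\
  is_pi 3 n (1 - psi2 (INR n)) /\
  is_pi 1 n 0.
Proof.
  unfold is_pi.
  repeat split; apply (Un_cv_eventually_constant _ _ n); intros k Hk;
    apply (dist_absorbed n k hn Hk).
Qed.
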